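(* Let $H=\sum_{k=1}^{m}\mathbb{Z}u_{k}$ with $u_k\in\mathbb{R}^n$, and suppose $u_1,\dots,u_p$ is a basis of $\mathrm{vect}(H)$, where $p\leq m<n$. Let $v_{p+1},\dots,v_n\in\mathbb{R}^n$ be such that $(u_1,\dots,u_p,v_{p+1},\dots,v_n)$ is a basis of $\mathbb{R}^n$. Then for every $1\leq r\leq n-m$, setting $H'=H+\sum_{k=1}^{r}\mathbb{Z}v_{p+k}$, one has $L(M_H)=L(M_{H'})$, where $M_H$ is computed from the ordered generating family $(u_1,\dots,u_m)$ and $M_{H'}$ from the ordered family $(u_1,\dots,u_p,v_{p+1},\dots,v_{p+r},u_{p+1},\dots,u_m)$. In particular $\Re(\widetilde{\mathrm{dim}}(\overline{H}))=\Re(\widetilde{\mathrm{dim}}(\overline{H'}))$.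
   Context: $\mathrm{vect}(A)$ is the real span of $A$; bars denote closure. Complex dimension: for an additive subgroup $G$ of $\mathbb{R}^n$, $\widetilde{\mathrm{dim}}(G):=p+i(s-p)$, $p=\max\{\dim V: V\text{ a vector subspace},\ V\subset G\}$, $s=\dim\mathrm{vect}(G)$. Definition of $L(M_G)$ for an ordered generating family $w_1,\dots,w_m$ of $G$ whose first $q$ members form a basis of $\mathrm{vect}(G)$: for $k=q+1,\dots,m$ write $w_k=\sum_{j=1}^q\alpha_{k,j}w_j$. Choose $I_k\subset\{1,\dots,q\}$ such that $\{1\}\cup\{\alpha_{k,i}:i\in I_k\}$ is a longest sublist of $1,\alpha_{k,1},\dots,\alpha_{k,q}$ linearly independent over $\mathbb{Q}$. For $j\notin I_k$ write $\alpha_{k,j}=t_{k,j}+\sum_{i\in I_k}\gamma^{(k)}_{j,i}\alpha_{k,i}$ with rational $t_{k,j},\gamma^{(k)}_{j,i}$. Choose $N\in\mathbb{N}^*$ with $m^{(k)}_{i,j}:=N\gamma^{(k)}_{i,j}\in\mathbb{Z}$, and put $w'_{k,j}=Nw_j+\sum_{i\notin I_k}m^{(k)}_{i,j}w_i$ for $j\in I_k$. $M_G$ is the matrix with columns all $w'_{k,j}$, and $L(M_G)=\mathrm{rank}(M_G)$. *)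

From HB Require Import structures.
From mathcomp Require Import all_boot all_order all_algebra.
From mathcomp Require Import all_classical all_reals all_analysis.
Set Implicit Arguments. Unset Strict Implicit. Unset Printing Implicit Defensive.
Import Order.TTheory GRing.Theory Num.Theory.
Import numFieldNormedType.Exports.
Local Open Scope ring_scope.
Local Open Scope classical_set_scope.

Section Defs.
Variables (R : realType) (n : nat).

Definition rows k (f : 'I_k -> 'rV[R]_n) : 'M[R]_(k, n) := \matrix_(i < k) f i.

Definition catf a b (f : 'I_a -> 'rV[R]_n) (g : 'I_b -> 'rV[R]_n)
  : 'I_(a + b) -> 'rV[R]_n :=
  fun i => match fintype.split i with inl j => f j | inr j => g j end.

Definition Zspan k (f : 'I_k -> 'rV[R]_n) : set 'rV[R]_n :=
  [set x | exists c : 'I_k -> int, x = \sum_(i < k) (c i)%:~R *: f i].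

Definition vect_dim (G : set 'rV[R]_n) : nat :=
  \max_(d < n.+1 | `[< exists f : 'I_d -> 'rV[R]_n,
                         row_free (rows f) /\ forall i, G (f i) >]) d.

Definition max_subspace_dim (G : set 'rV[R]_n) : nat :=
  \max_(d < n.+1 | `[< exists V : 'M[R]_n,
                         \rank V = d /\ forall x : 'rV[R]_n, (x <= V)%MS -> G x >]) d.

(* complex dimension  dim~(G) = p + i (s - p), encoded as the pair (Re, Im) *)
Definition cdim (G : set 'rV[R]_n) : nat * nat :=
  (max_subspace_dim G, (vect_dim G - max_subspace_dim G)%N).
Definition Re_cdim (G : set 'rV[R]_n) : nat := (cdim G).1.

(* the list 1, a_1, ..., a_q  (index 0 is the entry 1) *)
Definition ext1 q (a : 'I_q -> R) : 'I_q.+1 -> R :=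
  fun i => if unlift ord0 i is Some j then a j else 1.

Definition Qfree s (S : {set 'I_s}) (x : 'I_s -> R) : Prop :=
  forall c : 'I_s -> rat, (forall i, i \notin S -> c i = 0) ->
    \sum_(i < s) ratr (c i) * x i = 0 -> forall i, c i = 0.

Definition longest_Qfree q (a : 'I_q -> R) (I : {set 'I_q}) : Prop :=
  Qfree (ord0 |: [set lift ord0 i | i in I]) (ext1 a) /\
  forall S : {set 'I_q.+1}, Qfree S (ext1 a) -> (#|S| <= #|I|.+1)%N.

(* Valid choice data in the construction of M_G for the ordered generating
   family (b_1,...,b_q, e_1,...,e_s) (so w_j = b_j for j <= q and
   w_{q+k} = e_k). alpha k j = alpha_{q+k,j}, I k = I_{q+k},
   t k j = t^{(q+k)}_{j}, gam k j i = gamma^{(q+k)}_{j,i}. *)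
Definition LM_valid q s (b : 'I_q -> 'rV[R]_n) (e : 'I_s -> 'rV[R]_n)
  (alpha : 'I_s -> 'I_q -> R) (I : 'I_s -> {set 'I_q})
  (t : 'I_s -> 'I_q -> rat) (gam : 'I_s -> 'I_q -> 'I_q -> rat) (N : nat) : Prop :=
      row_free (rows b) /\
      (forall k, e k = \sum_(j < q) alpha k j *: b j) /\
      (forall k, longest_Qfree (alpha k) (I k)) /\
      (forall k j, j \notin I k ->
        alpha k j = ratr (t k j) + \sum_(i < q | i \in I k) ratr (gam k j i) * alpha k i) /\
      (0 < N)%N /\
      (forall k j i, j \notin I k -> i \in I k ->
        exists z : int, N%:Q * gam k j i = z%:~R).

(* w'_{k,j} = N w_j + sum_{i notin I_k} m^{(k)}_{i,j} w_i, with m = N gamma *)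
Definition wprime q s (b : 'I_q -> 'rV[R]_n) (I : 'I_s -> {set 'I_q})
  (gam : 'I_s -> 'I_q -> 'I_q -> rat) (N : nat) (k : 'I_s) (j : 'I_q) : 'rV[R]_n :=
  N%:R *: b j + \sum_(i < q | i \notin I k) ratr (N%:Q * gam k i j) *: b i.

Definition memI q (A : {set 'I_q}) (j : 'I_q) : bool := j \in A.

(* L(M_G) = rank of the matrix whose columns are all the w'_{k,j}, j in I_k
   (computed as the dimension of their span) *)
Definition LM q s (b : 'I_q -> 'rV[R]_n) (I : 'I_s -> {set 'I_q})
  (gam : 'I_s -> 'I_q -> 'I_q -> rat) (N : nat) : nat :=
  \rank ((\sum_(k < s) \sum_(j < q | memI (I k) j) <<wprime b I gam N k j>>)%MS : 'M[R]_n).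

End Defs.

From HB Require Import structures.
From mathcomp Require Import all_boot all_order all_algebra.
From mathcomp Require Import all_classical all_reals all_analysis.
From mathcomp Require Import ring lra zify.
Import Order.TTheory GRing.Theory Num.Theory.
Import numFieldNormedType.Exports.
Set Implicit Arguments. Unset Strict Implicit. Unset Printing Implicit Defensive.
Local Open Scope ring_scope.
Local Open Scope classical_set_scope.

(* Write the k-th vector outside the basis b as sum_j alpha_{k,j} b_j.
   A coefficient vector y "preserves the rational relations" of alpha_k if
   every relation c_0 + sum_i c_i alpha_{k,i} = 0 with rational c also holds
   as sum_i c_i y_i = 0. The coefficients of every w'_{k,j} preserve these
   relations, and conversely any sum_i y_i b_i with y preserving them lies in
   the span of the w'_{k,j}; so that span only depends on the relations of
   alpha_k. Appending v_{p+1},...,v_{p+r} to the basis pads each alpha_k with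
   zeros, which creates no new relation between the old coefficients and
   forces the new coefficients of relation-preserving vectors to vanish.
   For the real part of the complex dimension, the coordinate forms dual to
   the v's are integer-valued on H', so they vanish on every vector subspace
   contained in the closure of H'. Such a subspace therefore lies in
   vect(u_1,...,u_p), where the projection along the v's is the identity; as
   this projection is continuous and maps H' into H, the subspace lies in the
   closure of H. *)

Lemma split_lshift m n (i : 'I_m) : fintype.split (lshift n i) = inl i.
Proof. exact: (unsplitK (inl i : 'I_m + 'I_n)). Qed.

Lemma split_rshift m n (i : 'I_n) : fintype.split (rshift m i) = inr i.
Proof. exact: (unsplitK (inr i : 'I_m + 'I_n)). Qed.

Definition padr0 (V : nmodType) p r (y : 'I_p -> V) : 'I_(p + r) -> V :=
  fun i => if fintype.split i is inl j then y j else 0.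
Arguments padr0 {V p} r y.

Lemma padr0_lshift (V : nmodType) p r (y : 'I_p -> V) j : padr0 r y (lshift r j) = y j.
Proof. by rewrite /padr0 split_lshift. Qed.

Lemma padr0_rshift (V : nmodType) p r (y : 'I_p -> V) j : padr0 r y (rshift p j) = 0.
Proof. by rewrite /padr0 split_rshift. Qed.

Lemma sum_lshift (V : nmodType) p r (f : 'I_(p + r) -> V) :
  (forall j, f (rshift p j) = 0) -> \sum_i f i = \sum_j f (lshift r j).
Proof. by move=> f0; rewrite big_split_ord /= [X in _ + X]big1 ?addr0. Qed.

Section RationalRelations.
Variable R : realType.

Definition preserves_Qrel q (a y : 'I_q -> R) : Prop :=
  forall c0 (c : 'I_q -> rat),
    ratr c0 + \sum_i ratr (c i) * a i = 0 -> \sum_i ratr (c i) * y i = 0.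

Lemma preserves_QrelZ q (a y : 'I_q -> R) k :
  preserves_Qrel a y -> preserves_Qrel a (fun i => k * y i).
Proof.
move=> ay c0 c /ay /(congr1 (fun x => k * x)); rewrite /= mulr0 big_distrr /= => E.
by apply: etrans _ E; apply: eq_bigr => i _; rewrite mulrCA.
Qed.

Lemma ext1_0 q (a : 'I_q -> R) : ext1 a ord0 = 1.
Proof. by rewrite /ext1 unlift_none. Qed.

Lemma ext1_lift q (a : 'I_q -> R) j : ext1 a (lift ord0 j) = a j.
Proof. by rewrite /ext1 liftK. Qed.

Section Expansion.
Variables (q : nat) (a : 'I_q -> R) (I : {set 'I_q}).
Variables (t : 'I_q -> rat) (g : 'I_q -> 'I_q -> rat).
Hypothesis a_expand : forall j, j \notin I ->
  a j = ratr (t j) + \sum_(i < q | i \in I) ratr (g j i) * a i.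

Lemma Qrel_coef_eq0 :
  Qfree (ord0 |: [set lift ord0 i | i in I]) (ext1 a) ->
  forall c0 (c : 'I_q -> rat), ratr c0 + \sum_i ratr (c i) * a i = 0 ->
  forall l, l \in I -> c l + \sum_(j < q | j \notin I) c j * g j l = 0.
Proof.
move=> Qf c0 c Hc l lI.
(* Substituting the expansions of the a_j, j \notin I, turns the relation
   into one between 1 and the a_l, l \in I, with coefficients d. *)
pose d : 'I_q.+1 -> rat := fun i => match unlift ord0 i with
  | Some l => if l \in I then c l + \sum_(j < q | j \notin I) c j * g j l else 0
  | None => c0 + \sum_(j < q | j \notin I) c j * t j end.
have d0 : d ord0 = c0 + \sum_(j < q | j \notin I) c j * t j by rewrite /d unlift_none.
have d_lift i : d (lift ord0 i) =
    if i \in I then c i + \sum_(j < q | j \notin I) c j * g j i else 0.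
  by rewrite /d liftK.
have := Qf d _ _ (lift ord0 l); rewrite d_lift lI; apply.
  move=> i; case: (unliftP ord0 i) => [j ->|->]; last by rewrite !inE eqxx.
  rewrite d_lift; case: ifP => // jI.
  by rewrite !inE (mem_imset _ _ (@lift_inj _ ord0)) jI orbT.
rewrite big_ord_recl d0 ext1_0 mulr1.
under [X in _ + X]eq_bigr => i _ do rewrite d_lift ext1_lift.
apply: etrans _ Hc.
rewrite [X in _ = _ + X](bigID (mem I)) /=.
under [X in _ = _ + (_ + X)]eq_bigr => j /a_expand -> do rewrite mulrDr big_distrr /=.
rewrite big_split /= (exchange_big_dep (mem I)) //=.
rewrite rmorphD raddf_sum /= [X in _ + X = _](bigID (mem I)) /=.
rewrite [X in _ + (_ + X) = _]big1 ?addr0; last first.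
  by move=> i /negbTE ->; rewrite rmorph0 mul0r.
under [X in _ + X = _]eq_bigr => i iI do
  rewrite iI rmorphD raddf_sum mulrDl big_distrl.
rewrite big_split /=.
under [X in _ = _ + (_ + (_ + X))]eq_bigr => j jI do
  under eq_bigl => i do rewrite jI andbT.
rewrite -!addrA; congr (_ + _); rewrite addrCA; congr (_ + _).
congr (_ + _); first by apply: eq_bigr => i _; rewrite rmorphM.
by apply: eq_bigr => i _; apply: eq_bigr => j _; rewrite rmorphM mulrA.
Qed.

Lemma preserves_Qrel_column l :
  Qfree (ord0 |: [set lift ord0 i | i in I]) (ext1 a) -> l \in I ->
  preserves_Qrel a (fun i => if i \in I then (i == l)%:R else ratr (g i l)).
Proof.
move=> Qf lI c0 c Hc.
have := Qrel_coef_eq0 Qf Hc lI; move/(congr1 (@ratr R)).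
rewrite rmorphD raddf_sum rmorph0 => E; apply: etrans _ E.
rewrite (bigID (mem I)) /= (bigD1 l) //= lI eqxx mulr1 big1 ?addr0; last first.
  by move=> i /andP[iI /negbTE il]; rewrite iI il mulr0.
by congr (_ + _); apply: eq_bigr => i /negbTE ->; rewrite rmorphM.
Qed.

Lemma preserves_Qrel_expand y : preserves_Qrel a y ->
  forall i, i \notin I -> y i = \sum_(l < q | l \in I) ratr (g i l) * y l.
Proof.
move=> ay i iI.
pose c j := (j == i)%:R - (if j \in I then g i j else 0).
have sum_c (f : 'I_q -> R) :
    \sum_j ratr (c j) * f j = f i - \sum_(j < q | j \in I) ratr (g i j) * f j.
  under eq_bigr => j _ do rewrite rmorphB mulrBl.
  rewrite sumrB (bigD1 i) //= eqxx rmorph1 mul1r big1 ?addr0; last first.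
    by move=> j /negbTE ->; rewrite rmorph0 mul0r.
  congr (_ - _); rewrite (big_mkcond (fun j => j \in I)) /=.
  by apply: eq_bigr => j _; case: ifP; rewrite ?rmorph0 ?mul0r.
apply/eqP; rewrite -subr_eq0 -sum_c; apply/eqP; apply: (ay (- t i)).
by rewrite sum_c (a_expand iI) rmorphN addrK addNr.
Qed.

End Expansion.

Lemma sum_delta q (k : 'I_q) (f : 'I_q -> R) :
  \sum_i ratr ((i == k)%:R : rat) * f i = f k.
Proof.
under eq_bigr do rewrite rmorph_nat mulr_natl mulrb.
by rewrite -big_mkcond big_pred1_eq.
Qed.

Lemma preserves_Qrel_padr0 p r (a y : 'I_p -> R) :
  preserves_Qrel a y -> preserves_Qrel (padr0 r a) (padr0 r y).
Proof.
move=> ay c0 c.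
have pad_sum (z : 'I_p -> R) :
    \sum_i ratr (c i) * padr0 r z i = \sum_j ratr (c (lshift r j)) * z j.
  rewrite sum_lshift => [|j]; last by rewrite padr0_rshift mulr0.
  by apply: eq_bigr => j _; rewrite padr0_lshift.
by rewrite !pad_sum; apply: ay.
Qed.

Lemma preserves_Qrel_padr0_rshift p r (a : 'I_p -> R) (y : 'I_(p + r) -> R) j :
  preserves_Qrel (padr0 r a) y -> y (rshift p j) = 0.
Proof.
move/(_ 0 (fun i => (i == rshift p j)%:R)).
by rewrite !sum_delta padr0_rshift rmorph0 addr0; apply.
Qed.

Lemma preserves_Qrel_lshift p r (a : 'I_p -> R) (y : 'I_(p + r) -> R) :
  preserves_Qrel (padr0 r a) y -> preserves_Qrel a (fun j => y (lshift r j)).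
Proof.
move=> ay c0 c a_rel; move: (ay c0 (padr0 r c)).
have pad_sum (f : 'I_(p + r) -> R) :
    \sum_i ratr (padr0 r c i) * f i = \sum_j ratr (c j) * f (lshift r j).
  rewrite sum_lshift => [|j]; last by rewrite padr0_rshift rmorph0 mul0r.
  by apply: eq_bigr => j _; rewrite padr0_lshift.
rewrite !pad_sum; apply.
by under eq_bigr do rewrite padr0_lshift.
Qed.

End RationalRelations.

Section LMSpace.
Variables (R : realType) (n : nat).

Lemma row_free_coef_inj q (g : 'I_q -> 'rV[R]_n) (c c' : 'I_q -> R) :
  row_free (rows g) -> \sum_i c i *: g i = \sum_i c' i *: g i -> c =1 c'.
Proof.
have sum_rows (d : 'I_q -> R) : \sum_i d i *: g i = (\row_i d i) *m rows g.
  by rewrite mulmx_sum_row; apply: eq_bigr => i _; rewrite mxE rowK.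
by move=> free_g; rewrite !sum_rows => /(row_free_inj free_g)/rowP eq_c i;
  have := eq_c i; rewrite !mxE.
Qed.

Lemma sum_catf_padr0 p r (b : 'I_p -> 'rV[R]_n) (v : 'I_r -> 'rV[R]_n) (y : 'I_p -> R) :
  \sum_i padr0 r y i *: catf b v i = \sum_i y i *: b i.
Proof.
rewrite sum_lshift => [|j]; last by rewrite padr0_rshift scale0r.
by apply: eq_bigr => j _; rewrite padr0_lshift /catf split_lshift.
Qed.

Lemma sum_catf_lshift p r (b : 'I_p -> 'rV[R]_n) (v : 'I_r -> 'rV[R]_n)
    (y : 'I_(p + r) -> R) : (forall j, y (rshift p j) = 0) ->
  \sum_i y i *: catf b v i = \sum_i y (lshift r i) *: b i.
Proof.
move=> y0; rewrite sum_lshift => [|j]; last by rewrite y0 scale0r.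
by apply: eq_bigr => j _; rewrite /catf split_lshift.
Qed.

Definition LMspace q s (b : 'I_q -> 'rV[R]_n) (I : 'I_s -> {set 'I_q})
    (gam : 'I_s -> 'I_q -> 'I_q -> rat) (N : nat) : 'M[R]_n :=
  (\sum_(k < s) \sum_(j < q | memI (I k) j) <<wprime b I gam N k j>>)%MS.

Section Wprime.
Variables (q s : nat) (b : 'I_q -> 'rV[R]_n) (I : 'I_s -> {set 'I_q}).
Variables (gam : 'I_s -> 'I_q -> 'I_q -> rat) (N : nat).

Lemma ratr_natM (x : rat) : ratr (N%:Q * x) = N%:R * ratr x :> R.
Proof. by rewrite rmorphM rmorph_nat. Qed.

Lemma wprime_coefE k j : j \in I k ->
  wprime b I gam N k j =
  \sum_i (N%:R * (if i \in I k then (i == j)%:R else ratr (gam k i j))) *: b i.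
Proof.
move=> jI; rewrite /wprime [RHS](bigID (mem (I k))) /= [X in _ = X + _](bigD1 j) //=.
rewrite jI eqxx mulr1 [X in _ = _ + X + _]big1 ?addr0 => [|i /andP[-> /negbTE ->]];
  last by rewrite mulr0 scale0r.
by congr (_ + _); apply: eq_bigr => i /negbTE ->; rewrite ratr_natM.
Qed.

(* The witness combination of the w'_{k,l} has weights y_l / N. *)
Lemma sum_sub_wprime k (y : 'I_q -> R) : (0 < N)%N ->
  (forall i, i \notin I k -> y i = \sum_(l < q | l \in I k) ratr (gam k i l) * y l) ->
  ((\sum_i y i *: b i)%R <= \sum_(j < q | memI (I k) j) <<wprime b I gam N k j>>)%MS.
Proof.
move=> N_gt0 y_expand.
have N_neq0 : (N%:R : R) != 0 by rewrite pnatr_eq0 -lt0n.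
have -> : \sum_i y i *: b i =
    \sum_(l < q | l \in I k) (y l / N%:R) *: wprime b I gam N k l.
  rewrite (bigID (mem (I k))) /=.
  under [RHS]eq_bigr => l lI do
    rewrite /wprime scalerDr scalerA mulfVK // scaler_sumr.
  rewrite big_split /=; congr (_ + _).
  rewrite (exchange_big_dep (fun i => i \notin I k)) //=.
  apply: eq_bigr => i iI; rewrite (y_expand i iI) scaler_suml.
  apply: eq_big => [l|l lI]; first by rewrite iI andbT.
  by rewrite scalerA ratr_natM; congr (_ *: _); field.
apply: summx_sub => l lI; apply: scalemx_sub; apply: (sumsmx_sup l) => //.
by rewrite genmxE.
Qed.

End Wprime.

Section Valid.
Variables (q s : nat) (b : 'I_q -> 'rV[R]_n) (e : 'I_s -> 'rV[R]_n).
Variables (alpha : 'I_s -> 'I_q -> R) (I : 'I_s -> {set 'I_q}).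
Variables (t : 'I_s -> 'I_q -> rat) (gam : 'I_s -> 'I_q -> 'I_q -> rat) (N : nat).
Hypothesis valid : LM_valid b e alpha I t gam N.

Lemma wprime_preserves_Qrel k j : j \in I k ->
  exists y, preserves_Qrel (alpha k) y /\ wprime b I gam N k j = \sum_i y i *: b i.
Proof.
case: valid => [_ [_ [alpha_longest [alpha_expand _]]]] jI.
rewrite (wprime_coefE _ _ _ jI); eexists; split; last reflexivity.
apply: preserves_QrelZ.
exact: preserves_Qrel_column (alpha_expand k) _ (proj1 (alpha_longest k)) jI.
Qed.

Lemma preserves_Qrel_sub_LMspace k (y : 'I_q -> R) :
  preserves_Qrel (alpha k) y -> ((\sum_i y i *: b i)%R <= LMspace b I gam N)%MS.
Proof.
case: valid => [_ [_ [_ [alpha_expand [N_gt0 _]]]]] ay.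
apply: (sumsmx_sup k) => //; apply: sum_sub_wprime => // i iI.
exact (preserves_Qrel_expand (alpha_expand k) ay iI).
Qed.

End Valid.

Lemma coef_catf_padr0 p r s (b : 'I_p -> 'rV[R]_n) (v : 'I_r -> 'rV[R]_n)
    (e : 'I_s -> 'rV[R]_n) alpha I t gam N alpha' I' t' gam' N' :
  LM_valid b e alpha I t gam N -> LM_valid (catf b v) e alpha' I' t' gam' N' ->
  forall k, alpha' k = padr0 r (alpha k).
Proof.
case=> _ [e_alpha _] [free' [e_alpha' _]] k; apply/funext.
by apply: (row_free_coef_inj free'); rewrite sum_catf_padr0 -e_alpha e_alpha'.
Qed.

Lemma LM_catf p r s (b : 'I_p -> 'rV[R]_n) (v : 'I_r -> 'rV[R]_n)
    (e : 'I_s -> 'rV[R]_n) alpha I t gam N alpha' I' t' gam' N' :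
  LM_valid b e alpha I t gam N -> LM_valid (catf b v) e alpha' I' t' gam' N' ->
  LM b I gam N = LM (catf b v) I' gam' N'.
Proof.
move=> valid valid'; have alpha'E := coef_catf_padr0 valid valid'.
apply/eqP; rewrite eqn_leq; apply/andP; split; apply: mxrankS;
  apply/sumsmx_subP => k _; apply/sumsmx_subP => j jI; rewrite genmxE.
- have [y [ay ->]] := wprime_preserves_Qrel valid jI.
  rewrite -(sum_catf_padr0 (r := r) b v).
  apply: (preserves_Qrel_sub_LMspace (k := k) valid').
  by rewrite alpha'E; apply: preserves_Qrel_padr0.
- have [y [ay ->]] := wprime_preserves_Qrel valid' jI; rewrite alpha'E in ay.
  rewrite sum_catf_lshift => [|i]; last exact: preserves_Qrel_padr0_rshift ay.
  exact: (preserves_Qrel_sub_LMspace valid) (preserves_Qrel_lshift ay).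
Qed.

End LMSpace.

Section Topology.
Variable R : realType.

Lemma continuous_mulmx m n (W : 'M[R]_(m, n)) :
  continuous (fun x : 'rV[R]_m => x *m W).
Proof.
have -> : (fun x : 'rV[R]_m => x *m W) = (fun x => \sum_i x ord0 i *: row i W).
  by apply/funext => x; rewrite mulmx_sum_row.
apply: continuous_big => [|i _ x]; first exact: add_continuous.
exact/continuousZr_tmp/coord_continuous.
Qed.

Lemma continuous_closure_image (T U : topologicalType) (f : T -> U)
    (A : set T) (B : set U) :
  continuous f -> (forall a, A a -> B (f a)) ->
  forall x, closure A x -> closure B (f x).
Proof.
move=> f_cont AB x Ax C /f_cont/Ax [a [Aa Ca]].
by exists (f a); split => //; exact: AB.
Qed.

Lemma closure_intr_valued_neq_half (T : topologicalType) (A : set T) (f : T -> R) y :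
  continuous f -> (forall a, A a -> exists z : int, f a = z%:~R) ->
  closure A y -> f y != 2^-1.
Proof.
move=> f_cont A_int Ay; apply/eqP => fy.
have half_gt0 : (0 : R) < 2^-1 by rewrite invr_gt0.
have [a [Aa /= near_a]] := Ay _ (@cvgr_dist_lt _ _ _ _ _ f (f y) (f_cont y) _ half_gt0).
have [z fa] := A_int a Aa; move: near_a; rewrite fy fa ltr_norml => /andP[lb ub].
have : (0 : R) < z%:~R by lra.
have : (z%:~R : R) < 1 by lra.
by rewrite ltr0z ltrz1; lia.
Qed.

(* Otherwise a multiple of a vector of the subspace would take the value 1/2. *)
Lemma intr_valued_form_vanish m n (c : 'cV[R]_n) (A : set 'rV[R]_n)
    (V : 'M[R]_(m, n)) :
  (forall a, A a -> exists z : int, (a *m c) ord0 ord0 = z%:~R) ->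
  (forall x : 'rV_n, (x <= V)%MS -> closure A x) ->
  forall x : 'rV_n, (x <= V)%MS -> (x *m c) ord0 ord0 = 0.
Proof.
move=> A_int V_cl x xV; apply/eqP/negPn/negP => fx_neq0.
pose y := (2 * (x *m c) ord0 ord0)^-1 *: x.
have /negP[] : (y *m c) ord0 ord0 != 2^-1.
  apply: closure_intr_valued_neq_half A_int _ => [z|].
    exact (continuous_comp (@continuous_mulmx _ _ c z)
      (@coord_continuous R 1 1 ord0 ord0 (z *m c))).
  by apply: V_cl; rewrite scalemx_sub.
by rewrite -scalemxAl mxE; apply/eqP; field.
Qed.

End Topology.

Lemma rows_catf (R : realType) n a b (f : 'I_a -> 'rV[R]_n) (g : 'I_b -> 'rV[R]_n) :
  rows (catf f g) = col_mx (rows f) (rows g).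
Proof.
apply/matrixP => i j; rewrite !mxE /catf.
by case: (fintype.split i) => k; rewrite mxE.
Qed.

Section Projection.
Variables (R : realType) (n p s r : nat).
Variables (u : 'I_(p + s) -> 'rV[R]_n) (v : nat -> 'rV[R]_n).
Let b := fun j : 'I_p => u (lshift s j).
Let e := fun k : 'I_s => u (rshift p k).
Let b' := catf b (fun j : 'I_r => v j).
Let M := rows (catf b (fun j : 'I_(n - p) => v j)).
Hypothesis u_sub : forall k, (u k <= rows b)%MS.
Hypothesis M_free : row_free M.
Hypothesis M_full : row_full M.
Hypothesis r_le : (r <= n - p)%N.

(* x *m Q is the coordinate vector of x in the basis (b, v); P projects along
   the v's and phi l is the coordinate form of v_l. *)
Let Q := pinvmx M.
Let P (x : 'rV[R]_n) := x *m (lsubmx Q *m rows b).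
Let phi (l : 'I_(n - p)) : 'cV[R]_n := col l (rsubmx Q).

Lemma coordK (z : 'rV_(p + (n - p))) : z *m M *m Q = z.
Proof. by apply: (row_free_inj M_free); rewrite mulmxKpV // submx_full. Qed.

Lemma coordE (x : 'rV[R]_n) : x *m Q *m M = x.
Proof. by rewrite mulmxKpV // submx_full. Qed.

Lemma P_coord (z : 'rV_(p + (n - p))) : P (z *m M) = lsubmx z *m rows b.
Proof. by rewrite /P mulmxA mulmx_lsub coordK. Qed.

Lemma phi_coord l (z : 'rV_(p + (n - p))) : (z *m M *m phi l) ord0 ord0 = rsubmx z ord0 l.
Proof. by rewrite /phi colE mulmxA -colE mxE mulmx_rsub coordK. Qed.

Lemma b_coord j : b j = row_mx (delta_mx 0 j) 0 *m M.
Proof. by rewrite /M rows_catf mul_row_col mul0mx addr0 -rowE rowK. Qed.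

Lemma v_coord (j : 'I_r) : v j = row_mx 0 (delta_mx 0 (widen_ord r_le j)) *m M.
Proof. by rewrite /M rows_catf mul_row_col mul0mx add0r -rowE rowK. Qed.

Lemma e_coord k : e k = row_mx (e k *m pinvmx (rows b)) 0 *m M.
Proof. by rewrite /M rows_catf mul_row_col mul0mx addr0 mulmxKpV //; apply: u_sub. Qed.

Lemma catf_b'_b j : catf b' e (lshift s (lshift r j)) = b j.
Proof. by rewrite /catf split_lshift /b' /catf split_lshift. Qed.

Lemma catf_b'_v j : catf b' e (lshift s (rshift p j)) = v j.
Proof. by rewrite /catf split_lshift /b' /catf split_rshift. Qed.

Lemma catf_b'_e k : catf b' e (rshift (p + r) k) = e k.
Proof. by rewrite /catf split_rshift. Qed.

Lemma Zspan_catf x : Zspan u x -> Zspan (catf b' e) x.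
Proof.
case=> c ->.
exists (fun i => match fintype.split i with
         | inl j => padr0 r (fun j' => c (lshift s j')) j
         | inr k => c (rshift p k) end).
rewrite !big_split_ord /= [X in _ = _ + X + _]big1 ?addr0 => [|j _]; last first.
  by rewrite split_lshift padr0_rshift scale0r.
by congr (_ + _); apply: eq_bigr => j _;
  rewrite ?catf_b'_b ?catf_b'_e ?split_lshift ?split_rshift ?padr0_lshift.
Qed.

Lemma P_b j : P (b j) = b j.
Proof. by rewrite {1}b_coord P_coord row_mxKl -rowE rowK. Qed.

Lemma P_v (j : 'I_r) : P (v j) = 0.
Proof. by rewrite v_coord P_coord row_mxKl mul0mx. Qed.

Lemma P_e k : P (e k) = e k.
Proof. by rewrite {1}e_coord P_coord row_mxKl mulmxKpV //; apply: u_sub. Qed.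

Lemma P_sum k (c : 'I_k -> R) (g : 'I_k -> 'rV[R]_n) :
  P (\sum_i c i *: g i) = \sum_i c i *: P (g i).
Proof. by rewrite /P mulmx_suml; apply: eq_bigr => i _; rewrite scalemxAl. Qed.

Lemma P_Zspan x : Zspan (catf b' e) x -> Zspan u (P x).
Proof.
case=> c ->; rewrite P_sum.
exists (fun i => match fintype.split i with
         | inl j => c (lshift s (lshift r j))
         | inr k => c (rshift (p + r) k) end).
rewrite !big_split_ord /= [X in _ + X + _ = _]big1 ?addr0 => [|j _]; last first.
  by rewrite catf_b'_v P_v scaler0.
by congr (_ + _); apply: eq_bigr => j _;
  rewrite ?catf_b'_b ?catf_b'_e ?split_lshift ?split_rshift ?P_b ?P_e.
Qed.

Lemma phi_Zspan l (x : 'rV[R]_n) :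
  Zspan (catf b' e) x -> exists z : int, (x *m phi l) ord0 ord0 = z%:~R.
Proof.
have phi_gen i : exists z : int, (catf b' e i *m phi l) ord0 ord0 = z%:~R.
  case: (split_ordP i) => [j ->|k ->]; last by exists 0; rewrite catf_b'_e e_coord
    phi_coord row_mxKr mxE.
  case: (split_ordP j) => [j' ->|j' ->].
    by exists 0; rewrite catf_b'_b b_coord phi_coord row_mxKr mxE.
  by exists (Posz (l == widen_ord r_le j')); rewrite catf_b'_v v_coord phi_coord
    row_mxKr mxE /=.
case=> c ->; rewrite mulmx_suml summxE.
apply: (big_ind (fun x => exists z : int, x = z%:~R)) => [|_ _ [z1 ->] [z2 ->]|i _].
- by exists 0.
- by exists (z1 + z2); rewrite intrD.
have [z Hz] := phi_gen i; exists (c i * z).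
by rewrite -scalemxAl mxE Hz intrM.
Qed.

Lemma P_id (x : 'rV[R]_n) : (forall l, (x *m phi l) ord0 ord0 = 0) -> P x = x.
Proof.
move=> phi0; have z_r0 : rsubmx (x *m Q) = 0.
  by apply/rowP => l; rewrite [RHS]mxE -(phi0 l) -[in RHS](coordE x) phi_coord.
by rewrite -(coordE x) -(hsubmxK (x *m Q)) P_coord z_r0 row_mxKl
  /M rows_catf mul_row_col mul0mx addr0.
Qed.

Lemma max_subspace_dim_closure_catf :
  max_subspace_dim (closure (Zspan u)) = max_subspace_dim (closure (Zspan (catf b' e))).
Proof.
rewrite /max_subspace_dim; apply: eq_bigl => d.
apply/asboolP/asboolP => -[V [rkV V_cl]]; exists V; split => // x xV.
  exact: (closureS Zspan_catf) (V_cl x xV).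
have phi0 l := intr_valued_form_vanish (@phi_Zspan l) V_cl xV.
rewrite -(P_id phi0); apply: continuous_closure_image (V_cl x xV).
  exact: continuous_mulmx.
exact: P_Zspan.
Qed.

End Projection.

(* u : the family u_1..u_m with m = p + s; v j = v_{p+1+j}. *)
Theorem lemma3p2 (R : realType) (n p s : nat)
  (u : 'I_(p + s) -> 'rV[R]_n) (v : nat -> 'rV[R]_n) :
  (p + s < n)%N ->
  (* u_1..u_p is a basis of vect(H) *)
  row_free (rows (fun j : 'I_p => u (lshift s j))) ->
  (forall k : 'I_(p + s), (u k <= rows (fun j : 'I_p => u (lshift s j)))%MS) ->
  (* (u_1..u_p, v_{p+1}..v_n) is a basis of R^n *)
  row_free (rows (catf (fun j : 'I_p => u (lshift s j)) (fun j : 'I_(n - p) => v j))) ->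
  row_full (rows (catf (fun j : 'I_p => u (lshift s j)) (fun j : 'I_(n - p) => v j))) ->
  forall r : nat, (1 <= r <= n - (p + s))%N ->
  let H := Zspan u in
  let b' := catf (fun j : 'I_p => u (lshift s j)) (fun j : 'I_r => v j) in
  let e := fun k : 'I_s => u (rshift p k) in
  let H' := Zspan (catf b' e) in
  (forall alpha I t gam N alpha' I' t' gam' N',
     LM_valid (fun j : 'I_p => u (lshift s j)) e alpha I t gam N ->
     LM_valid b' e alpha' I' t' gam' N' ->
     LM (fun j : 'I_p => u (lshift s j)) I gam N = LM b' I' gam' N')
  /\ Re_cdim (closure H) = Re_cdim (closure H').
Proof.
move=> _ _ u_sub M_free M_full r r_bounds H b' e H'; split.
  by move=> alpha I t gam N alpha' I' t' gam' N'; apply: LM_catf.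
have r_le : (r <= n - p)%N by case/andP: r_bounds => _; lia.
exact: max_subspace_dim_closure_catf u_sub M_free M_full r_le.
Qed.
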